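(* Consider the setting in the context, with strike $K\in(0,\infty)$. Let $\bar w=W\left(s_0e^{(\delta-\frac{\eta^2}{2})T}\eta^2T\lambda\gamma(1-\rho^2)\right)$ and suppose $$K\ge\frac1{\lambda\gamma(1-\rho^2)}\left(\frac{\bar w}{\eta^2T}+\frac{\bar w^2}{2\eta^2T}\right).$$ Then $p^{put}=D^{put}+A^{put}$, where $$D^{put}=\lambda e^{-rT}K-\frac{e^{-rT}}{\gamma(1-\rho^2)}\left(\frac{\bar w}{\eta^2T}+\frac{\bar w^2}{2\eta^2T}\right),\qquad A^{put}=\frac{e^{-rT}}{\gamma(1-\rho^2)}\ln\mathbb E(\psi_K(N)),$$ $$\psi_K(y)=\exp\left(-\frac{\bar w}{\eta^2T}\left(e^{\eta\sqrt Ty}-1-\eta\sqrt Ty\right)+\left(\frac{\bar w}{\eta^2T}e^{\eta\sqrt Ty}-\lambda\gamma(1-\rho^2)K\right)_+\right).$$ Moreover $V^{put}(x_0,s_0,\lambda,K)=V^{put}_D(x_0,s_0,\lambda,K)\,V^{put}_A(s_0,\lambda,K)$, where $$V^{put}_D(x_0,s_0,\lambda,K)=-\frac1\gamma\exp\left(-\gamma e^{rT}(x_0-D^{put})-\frac{(\mu-r)^2}{2\sigma^2}T\right),\qquad V^{put}_A(s_0,\lambda,K)=\exp\left(\gamma e^{rT}A^{put}\right).$$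
   Context: Fix $T>0$, $r,\nu,\mu,x_0\in\mathbb R$, $\eta>0$, $\sigma>0$, $\rho\in(-1,1)$, $s_0>0$, $\lambda>0$, $\gamma>0$; $N$ is a standard Gaussian random variable; $\delta=\nu-\eta\rho\frac{\mu-r}{\sigma}$; $W$ is the Lambert function (inverse of $x\in(-1,\infty)\mapsto xe^x$); $x_+=\max(x,0)$. (Model: non-traded asset $dS=S(\nu dt+\eta dZ)$, traded asset $dP=P(\mu dt+\sigma dB)$, correlation $\rho$, bond rate $r$, utility $-\frac1\gamma e^{-\gamma x}$; the agent is short $\lambda$ put options with payoff $(K-S_T)_+$.) The selling reservation price and the value function of this short put position are $$p^{put}=\frac{e^{-rT}}{\gamma(1-\rho^2)}\ln\mathbb E\exp\left(\lambda\gamma(1-\rho^2)\left(K-s_0e^{(\delta-\frac{\eta^2}{2})T}e^{\eta\sqrt TN}\right)_+\right),$$ $$V^{put}(x_0,s_0,\lambda,K)=-\frac1\gamma e^{-\gamma x_0e^{rT}-\frac{(\mu-r)^2}{2\sigma^2}T}\left(\mathbb E\exp\left(\lambda\gamma(1-\rho^2)\left(K-s_0e^{(\delta-\frac{\eta^2}{2})T}e^{\eta\sqrt TN}\right)_+\right)\right)^{\frac1{1-\rho^2}}.$$ *)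

From Stdlib Require Import Reals ClassicalEpsilon.
From Coquelicot Require Import Coquelicot.
Open Scope R_scope.

Definition pos_part (x : R) : R := Rmax x 0.

(* Lambert function: inverse of x in (-1,oo) |-> x e^x
   (defined, via choice, on its range (-1/e, oo); arbitrary elsewhere). *)
Definition LambertW (x : R) : R :=
  epsilon (inhabits 0) (fun w => -1 < w /\ w * exp w = x).

Definition gauss_density (y : R) : R := exp (- (y ^ 2) / 2) / sqrt (2 * PI).

Definition Egauss (f : R -> R) : R :=
  RInt_gen (fun y => f y * gauss_density y)
    (Rbar_locally m_infty) (Rbar_locally p_infty).

Definition delta (r nu mu eta sigma rho : R) : R :=
  nu - eta * rho * ((mu - r) / sigma).

Definition put_integrand (T r nu mu eta sigma rho s0 lam gam K : R) (y : R) : R :=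
  exp (lam * gam * (1 - rho ^ 2) *
       pos_part (K - s0 * exp ((delta r nu mu eta sigma rho - eta ^ 2 / 2) * T)
                       * exp (eta * sqrt T * y))).

Definition p_put (T r nu mu eta sigma rho s0 lam gam K : R) : R :=
  exp (- r * T) / (gam * (1 - rho ^ 2)) *
  ln (Egauss (put_integrand T r nu mu eta sigma rho s0 lam gam K)).

Definition V_put (T r nu mu eta sigma rho x0 s0 lam gam K : R) : R :=
  - / gam * exp (- gam * x0 * exp (r * T) - (mu - r) ^ 2 / (2 * sigma ^ 2) * T) *
  Rpower (Egauss (put_integrand T r nu mu eta sigma rho s0 lam gam K))
         (/ (1 - rho ^ 2)).

Definition wbar (T r nu mu eta sigma rho s0 lam gam : R) : R :=
  LambertW (s0 * exp ((delta r nu mu eta sigma rho - eta ^ 2 / 2) * T)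
            * eta ^ 2 * T * lam * gam * (1 - rho ^ 2)).

Definition D_put (T r nu mu eta sigma rho s0 lam gam K : R) : R :=
  let w := wbar T r nu mu eta sigma rho s0 lam gam in
  lam * exp (- r * T) * K -
  exp (- r * T) / (gam * (1 - rho ^ 2)) *
    (w / (eta ^ 2 * T) + w ^ 2 / (2 * eta ^ 2 * T)).

Definition psi_K (T r nu mu eta sigma rho s0 lam gam K : R) (y : R) : R :=
  let w := wbar T r nu mu eta sigma rho s0 lam gam in
  exp (- (w / (eta ^ 2 * T)) *
         (exp (eta * sqrt T * y) - 1 - eta * sqrt T * y) +
       pos_part (w / (eta ^ 2 * T) * exp (eta * sqrt T * y)
                 - lam * gam * (1 - rho ^ 2) * K)).

Definition A_put (T r nu mu eta sigma rho s0 lam gam K : R) : R :=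
  exp (- r * T) / (gam * (1 - rho ^ 2)) *
  ln (Egauss (psi_K T r nu mu eta sigma rho s0 lam gam K)).

Definition V_put_D (T r nu mu eta sigma rho x0 s0 lam gam K : R) : R :=
  - / gam * exp (- gam * exp (r * T) * (x0 - D_put T r nu mu eta sigma rho s0 lam gam K)
                 - (mu - r) ^ 2 / (2 * sigma ^ 2) * T).

Definition V_put_A (T r nu mu eta sigma rho s0 lam gam K : R) : R :=
  exp (gam * exp (r * T) * A_put T r nu mu eta sigma rho s0 lam gam K).

From Stdlib Require Import Reals Lra Classical ClassicalEpsilon.
From Coquelicot Require Import Coquelicot.
Open Scope R_scope.

(* Write c = lam gam (1 - rho^2), z = eta sqrt T and a0 = s0 e^((delta - eta^2/2) T), so
   that the put integrand is exp (c (K - a0 e^(z y))_+).  The Lambert value w solves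
   w e^w = a0 z^2 c, hence after the Cameron-Martin shift y -> y - w/z the tilted
   payoff c a0 e^(z (y - w/z)) becomes (w/z^2) e^(z y), and completing the square turns
   the tilted integrand into e^(cK - w/z^2 - w^2/(2 z^2)) psi_K.  Therefore
   E psi_K(N) = e^(-(cK - w/z^2 - w^2/(2 z^2))) E put(N); taking logarithms splits
   p_put into D_put + A_put, and V_put, an exponential of p_put, factors accordingly. *)

Lemma LambertW_mul_exp (x : R) : 0 <= x -> LambertW x * exp (LambertW x) = x.
Proof.
  intros hx. unfold LambertW.
  assert (Hex : exists w, -1 < w /\ w * exp w = x).
  { assert (Hc : forall y : R_UniformSpace, continuous (fun w => w * exp w) y).
    { intros y. apply (continuous_mult (fun w : R => w) exp).
      - apply continuous_id.
      - apply continuous_exp. }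
    assert (Hxe : x <= x * exp x).
    { pose proof (exp_ineq1_le x). nra. }
    destruct (IVT_gen_consistent (fun w => w * exp w) 0 x x Hc) as [w [Hw Hwx]].
    { rewrite Rmult_0_l, Rmin_left, Rmax_right by nra. lra. }
    exists w. rewrite Rmin_left in Hw by lra. split; [lra | exact Hwx]. }
  exact (proj2 (epsilon_spec (inhabits 0) _ Hex)).
Qed.

Lemma pos_part_sub_swap (x y : R) : pos_part (x - y) = pos_part (y - x) + x - y.
Proof.
  unfold pos_part, Rmax.
  destruct (Rle_dec (x - y) 0), (Rle_dec (y - x) 0); lra.
Qed.

Lemma pos_part_scal (c x : R) : 0 <= c -> c * pos_part x = pos_part (c * x).
Proof.
  intros hc. unfold pos_part.
  rewrite <- RmaxRmult, Rmult_0_r by exact hc. reflexivity.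
Qed.

Lemma pos_part_le (x y : R) : x <= y -> pos_part x <= pos_part y.
Proof. intros. unfold pos_part, Rmax. destruct (Rle_dec x 0), (Rle_dec y 0); lra. Qed.

Lemma continuous_pos_part (h : R -> R) (x : R) :
  continuous h x -> continuous (fun y => pos_part (h y)) x.
Proof.
  intros Hh.
  apply (continuous_ext (fun y => (h y + Rabs (h y)) / 2)).
  { intros y. unfold pos_part, Rmax. destruct (Rle_dec (h y) 0).
    - rewrite Rabs_left1 by lra. lra.
    - rewrite Rabs_right by lra. lra. }
  apply (continuous_mult (fun y => h y + Rabs (h y)) (fun _ => / 2)).
  - apply (continuous_plus h (fun y => Rabs (h y))); [exact Hh|].
    apply continuous_Rabs_comp, Hh.
  - apply continuous_const.
Qed.

Lemma gauss_density_shift (m y : R) :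
  gauss_density (y - m) = exp (m * y - m ^ 2 / 2) * gauss_density y.
Proof.
  unfold gauss_density, Rdiv. rewrite <- Rmult_assoc, <- exp_plus.
  f_equal. f_equal. field.
Qed.

Lemma gauss_density_pos (y : R) : 0 < gauss_density y.
Proof.
  apply Rdiv_lt_0_compat; [apply exp_pos|].
  apply sqrt_lt_R0. pose proof PI_RGT_0. lra.
Qed.

Lemma gauss_density_le (y : R) : gauss_density y <= / (1 + y ^ 2).
Proof.
  assert (Hexp : 1 + y ^ 2 / 2 <= exp (y ^ 2 / 2)) by apply exp_ineq1_le.
  assert (Hsqrt : 2 <= sqrt (2 * PI)).
  { rewrite <- (sqrt_square 2) at 1 by lra.
    apply sqrt_le_1_alt. pose proof PI2_1. lra. }
  assert (Hy : 0 <= y ^ 2) by nra.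
  unfold gauss_density, Rdiv.
  replace (- y ^ 2 * / 2) with (- (y ^ 2 / 2)) by field.
  rewrite exp_Ropp, <- Rinv_mult.
  apply Rinv_le_contravar; nra.
Qed.

Lemma continuous_gauss_density (y : R) : continuous gauss_density y.
Proof.
  apply (@ex_derive_continuous R_AbsRing R_NormedModule).
  unfold gauss_density. auto_derive. auto.
Qed.

Lemma is_RInt_gen_ext_pointwise {Fa Fb : (R -> Prop) -> Prop}
  {FFa : Filter Fa} {FFb : Filter Fb} (f g : R -> R) (l : R) :
  (forall x, f x = g x) -> is_RInt_gen f Fa Fb l -> is_RInt_gen g Fa Fb l.
Proof.
  intros Hfg. apply is_RInt_gen_ext.
  apply Filter_prod with (fun _ => True) (fun _ => True); try apply filter_true.
  intros a b _ _ x _. apply Hfg.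
Qed.

Lemma is_RInt_gen_shift (f : R -> R) (v l : R) :
  is_RInt_gen f (Rbar_locally m_infty) (Rbar_locally p_infty) l ->
  is_RInt_gen (fun y => f (y + v)) (Rbar_locally m_infty) (Rbar_locally p_infty) l.
Proof.
  intros Hf P HP. destruct (Hf P HP) as [Qa Qb [Ma HMa] [Mb HMb] HQ].
  apply Filter_prod with (fun a => Qa (a + v)) (fun b => Qb (b + v)).
  - exists (Ma - v). intros x hx. apply HMa. lra.
  - exists (Mb - v). intros x hx. apply HMb. lra.
  - intros a b Qav Qbv. destruct (HQ _ _ Qav Qbv) as [I [HI PI']].
    exists I. split; [simpl in HI |- * | exact PI'].
    apply (is_RInt_ext (fun y => scal 1 (f (1 * y + v)))).
    { intros y _. replace (1 * y + v) with (y + v) by ring. apply (scal_one (V := R_NormedModule)). }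
    apply (is_RInt_comp_lin f 1 v a b I).
    replace (1 * a + v) with (a + v) by ring. replace (1 * b + v) with (b + v) by ring.
    exact HI.
Qed.

Lemma RInt_subinterval_le (g : R -> R) (a a' b' b : R) :
  (forall x, continuous g x) -> (forall x, 0 <= g x) ->
  a <= a' -> a' <= b' -> b' <= b -> RInt g a' b' <= RInt g a b.
Proof.
  intros Hc Hp h1 h2 h3.
  assert (Hex : forall u v, ex_RInt g u v).
  { intros u v. apply (@ex_RInt_continuous R_CompleteNormedModule). auto. }
  rewrite <- (RInt_Chasles g a a' b), <- (RInt_Chasles g a' b' b) by auto.
  assert (0 <= RInt g a a') by (apply RInt_ge_0; auto).
  assert (0 <= RInt g b' b) by (apply RInt_ge_0; auto).
  change plus with Rplus. lra.
Qed.

(* The improper integral is the supremum of the integrals over bounded intervals. *)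
Lemma is_RInt_gen_nonneg_bounded (g : R -> R) (B : R) :
  (forall x, continuous g x) -> (forall x, 0 <= g x) ->
  (forall a b, a <= b -> RInt g a b <= B) ->
  exists l, is_RInt_gen g (Rbar_locally m_infty) (Rbar_locally p_infty) l /\
            forall a b, a <= b -> RInt g a b <= l.
Proof.
  intros Hc Hp HB.
  set (E := fun v => exists a b, a <= b /\ v = RInt g a b).
  destruct (completeness E) as [l [Hub Hlub]].
  { exists B. intros v [a [b [Hab ->]]]. auto. }
  { exists (RInt g 0 0). exists 0, 0. split; auto; lra. }
  assert (Hle : forall a b, a <= b -> RInt g a b <= l).
  { intros a b Hab. apply Hub. exists a, b. auto. }
  exists l. split; [|exact Hle].
  intros P [eps Heps].
  assert (Happrox : exists a0 b0, a0 <= b0 /\ l - eps < RInt g a0 b0).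
  { apply NNPP. intros Hn.
    assert (l <= l - eps); [|destruct eps; simpl in *; lra].
    apply Hlub. intros v [a [b [Hab ->]]].
    apply Rnot_lt_le. intros Hlt. apply Hn. exists a, b. auto. }
  destruct Happrox as [a0 [b0 [Hab0 Hlt]]].
  apply Filter_prod with (fun a => a < a0) (fun b => b0 < b).
  - exists a0. auto.
  - exists b0. auto.
  - intros a b ha hb. exists (RInt g a b). split.
    + apply (@RInt_correct R_CompleteNormedModule).
      apply (@ex_RInt_continuous R_CompleteNormedModule). auto.
    + apply Heps. change (Rabs (RInt g a b - l) < eps).
      assert (RInt g a0 b0 <= RInt g a b) by (apply RInt_subinterval_le; auto; lra).
      rewrite Rabs_left1 by (pose proof (Hle a b); lra). lra.
Qed.

Lemma is_RInt_atan (a b : R) : is_RInt (fun y => / (1 + y ^ 2)) a b (atan b - atan a).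
Proof.
  apply (@is_RInt_derive R_CompleteNormedModule atan).
  - intros x _. replace (/ (1 + x ^ 2)) with (/ (1 + x²)) by (unfold Rsqr; f_equal; ring).
    apply is_derive_atan.
  - intros x _. apply (@ex_derive_continuous R_AbsRing R_NormedModule).
    auto_derive. nra.
Qed.

Definition is_Egauss (f : R -> R) (l : R) : Prop :=
  is_RInt_gen (fun y => f y * gauss_density y)
    (Rbar_locally m_infty) (Rbar_locally p_infty) l.

Lemma Egauss_unique (f : R -> R) (l : R) : is_Egauss f l -> Egauss f = l.
Proof. intros Hf. unfold Egauss. apply is_RInt_gen_unique. exact Hf. Qed.

Lemma is_Egauss_ext (f g : R -> R) (l : R) :
  (forall y, f y = g y) -> is_Egauss f l -> is_Egauss g l.
Proof.
  unfold is_Egauss. intros Hfg.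
  apply is_RInt_gen_ext_pointwise. intros y. rewrite Hfg. reflexivity.
Qed.

Lemma is_Egauss_scal (f : R -> R) (k l : R) :
  is_Egauss f l -> is_Egauss (fun y => k * f y) (k * l).
Proof.
  unfold is_Egauss. intros Hf.
  apply (is_RInt_gen_ext_pointwise (fun y => scal k (f y * gauss_density y))).
  - intros y. symmetry. apply Rmult_assoc.
  - exact (is_RInt_gen_scal _ k _ Hf).
Qed.

(* Cameron–Martin: the law of [N + m] has density [exp (m y - m^2/2)] w.r.t. that of [N]. *)
Lemma is_Egauss_shift (f : R -> R) (m l : R) :
  is_Egauss f l -> is_Egauss (fun y => exp (m * y - m ^ 2 / 2) * f (y - m)) l.
Proof.
  unfold is_Egauss. intros Hf.
  apply (is_RInt_gen_ext_pointwise (fun y => f (y + - m) * gauss_density (y + - m))).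
  - intros y. replace (y + - m) with (y - m) by ring.
    rewrite gauss_density_shift. ring.
  - exact (is_RInt_gen_shift _ (- m) l Hf).
Qed.

Lemma is_Egauss_bounded_pos (f : R -> R) (M : R) :
  (forall y, continuous f y) -> (forall y, 0 < f y <= M) ->
  exists l, 0 < l /\ is_Egauss f l.
Proof.
  intros Hc Hb.
  set (g := fun y => f y * gauss_density y).
  assert (Hgc : forall y, continuous g y).
  { intros y. apply (continuous_mult f gauss_density); [apply Hc | apply continuous_gauss_density]. }
  assert (Hgpos : forall y, 0 < g y).
  { intros y. apply Rmult_lt_0_compat; [apply Hb | apply gauss_density_pos]. }
  assert (HM : 0 <= M) by (destruct (Hb 0); lra).
  assert (Hgle : forall y, g y <= M * / (1 + y ^ 2)).
  { intros y. apply Rmult_le_compat; [apply Rlt_le, Hb | apply Rlt_le, gauss_density_pos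
                                      | apply Hb | apply gauss_density_le]. }
  assert (Hint : forall a b, a <= b -> RInt g a b <= M * PI).
  { intros a b Hab.
    assert (HI : is_RInt (fun y => M * / (1 + y ^ 2)) a b (M * (atan b - atan a)))
      by exact (is_RInt_scal _ _ _ M _ (is_RInt_atan a b)).
    apply Rle_trans with (M * (atan b - atan a)).
    - rewrite <- (is_RInt_unique _ _ _ _ HI).
      apply RInt_le; auto.
      + apply (@ex_RInt_continuous R_CompleteNormedModule). auto.
      + exists (M * (atan b - atan a)). exact HI.
    - pose proof (atan_bound a). pose proof (atan_bound b). nra. }
  destruct (is_RInt_gen_nonneg_bounded g (M * PI) Hgc (fun y => Rlt_le _ _ (Hgpos y)) Hint)
    as [l [Hl Hle]].
  exists l. split; [|exact Hl].
  apply Rlt_le_trans with (RInt g 0 1); [|apply Hle; lra].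
  apply RInt_gt_0; auto. lra.
Qed.

Lemma exp_put_payoff_tilt (c a0 K z w u : R) :
  0 < c -> z <> 0 -> w * exp w = a0 * z ^ 2 * c ->
  exp (- (w / z ^ 2) * (exp (z * u) - 1 - z * u) + pos_part (w / z ^ 2 * exp (z * u) - c * K))
  = exp (- (c * K - (w / z ^ 2 + w ^ 2 / (2 * z ^ 2))))
    * (exp (w / z * u - (w / z) ^ 2 / 2) * exp (c * pos_part (K - a0 * exp (z * (u - w / z))))).
Proof.
  intros hc hz Hw.
  assert (hew : exp w <> 0) by apply Rgt_not_eq, exp_pos.
  assert (Hpayoff : c * (a0 * exp (z * (u - w / z))) = w / z ^ 2 * exp (z * u)).
  { replace (z * (u - w / z)) with (z * u + - w) by (field; exact hz).
    rewrite exp_plus, exp_Ropp.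
    replace a0 with (w * exp w / (z ^ 2 * c)) by (rewrite Hw; field; split; (lra || assumption)).
    field. repeat split; (lra || assumption). }
  rewrite pos_part_scal, (Rmult_minus_distr_l c K), (pos_part_sub_swap (c * K)), Hpayoff by lra.
  rewrite <- !exp_plus. f_equal. field. exact hz.
Qed.

Section PutPrice.
Variables (T r nu mu eta sigma rho x0 s0 lam gam K : R).

Local Notation c := (lam * gam * (1 - rho ^ 2)).
Local Notation a0 := (s0 * exp ((delta r nu mu eta sigma rho - eta ^ 2 / 2) * T)).
Local Notation z := (eta * sqrt T).
Local Notation w := (wbar T r nu mu eta sigma rho s0 lam gam).
Local Notation C := (c * K - (w / (eta ^ 2 * T) + w ^ 2 / (2 * eta ^ 2 * T))).
Local Notation put := (put_integrand T r nu mu eta sigma rho s0 lam gam K).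
Local Notation psi := (psi_K T r nu mu eta sigma rho s0 lam gam K).

Lemma V_put_eq_exp_p_put : gam <> 0 -> 1 - rho ^ 2 <> 0 ->
  V_put T r nu mu eta sigma rho x0 s0 lam gam K =
  - / gam * exp (- gam * exp (r * T) * (x0 - p_put T r nu mu eta sigma rho s0 lam gam K)
                 - (mu - r) ^ 2 / (2 * sigma ^ 2) * T).
Proof.
  intros hgam hrho.
  unfold V_put, p_put, Rpower.
  rewrite Rmult_assoc, <- exp_plus. do 2 f_equal.
  set (Q := (mu - r) ^ 2 / (2 * sigma ^ 2) * T).
  replace (- r * T) with (- (r * T)) by ring. rewrite exp_Ropp.
  assert (exp (r * T) <> 0) by apply Rgt_not_eq, exp_pos.
  field. repeat split; assumption.
Qed.

Lemma V_put_D_mul_V_put_A :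
  V_put_D T r nu mu eta sigma rho x0 s0 lam gam K * V_put_A T r nu mu eta sigma rho s0 lam gam K =
  - / gam * exp (- gam * exp (r * T) *
                   (x0 - (D_put T r nu mu eta sigma rho s0 lam gam K +
                          A_put T r nu mu eta sigma rho s0 lam gam K))
                 - (mu - r) ^ 2 / (2 * sigma ^ 2) * T).
Proof.
  unfold V_put_D, V_put_A.
  rewrite Rmult_assoc, <- exp_plus. do 2 f_equal. ring.
Qed.

Hypotheses (hT : 0 < T) (heta : 0 < eta) (hrho : -1 < rho < 1) (hs0 : 0 < s0)
  (hlam : 0 < lam) (hgam : 0 < gam).

Lemma one_sub_rho_sq_pos : 0 < 1 - rho ^ 2.
Proof. nra. Qed.

Lemma risk_weight_pos : 0 < c.
Proof.
  pose proof one_sub_rho_sq_pos.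
  apply Rmult_lt_0_compat; [apply Rmult_lt_0_compat|]; assumption.
Qed.

Lemma wbar_mul_exp : w * exp w = a0 * z ^ 2 * c.
Proof.
  assert (Hz : z ^ 2 = eta ^ 2 * T) by (rewrite Rpow_mult_distr, pow2_sqrt; lra).
  pose proof risk_weight_pos.
  unfold wbar. rewrite LambertW_mul_exp.
  - rewrite Hz. ring.
  - apply Rlt_le. repeat apply Rmult_lt_0_compat; try nra. apply exp_pos.
Qed.

Lemma continuous_put_integrand (y : R) : continuous put y.
Proof.
  apply continuous_exp_comp.
  apply (continuous_mult (fun _ => c)); [apply continuous_const|].
  apply continuous_pos_part.
  apply (@ex_derive_continuous R_AbsRing R_NormedModule). auto_derive. auto.
Qed.

Lemma put_integrand_bounds (y : R) : 0 < put y <= exp (c * pos_part K).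
Proof.
  split; [apply exp_pos|].
  assert (Hle : c * pos_part (K - a0 * exp (z * y)) <= c * pos_part K).
  { pose proof risk_weight_pos. apply Rmult_le_compat_l; [lra|].
    apply pos_part_le.
    assert (0 < a0 * exp (z * y)) by (repeat apply Rmult_lt_0_compat; auto; apply exp_pos).
    lra. }
  unfold put_integrand.
  destruct Hle as [Hlt | Heq]; [left; apply exp_increasing, Hlt | right; rewrite Heq; reflexivity].
Qed.

Lemma psi_K_tilt (u : R) :
  psi u = exp (- C) * (exp (w / z * u - (w / z) ^ 2 / 2) * put (u - w / z)).
Proof.
  assert (Hz : eta ^ 2 * T = z ^ 2) by (rewrite Rpow_mult_distr, pow2_sqrt; lra).
  assert (Hz2 : 2 * eta ^ 2 * T = 2 * z ^ 2) by (rewrite <- Hz; ring).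
  assert (hz : z <> 0) by (apply Rgt_not_eq, Rmult_lt_0_compat; [|apply sqrt_lt_R0]; lra).
  unfold psi_K, put_integrand. rewrite Hz, Hz2.
  apply exp_put_payoff_tilt; [apply risk_weight_pos | exact hz | apply wbar_mul_exp].
Qed.

Lemma Egauss_put_integrand_psi_K :
  0 < Egauss put /\ Egauss psi = exp (- C) * Egauss put.
Proof.
  destruct (is_Egauss_bounded_pos put _ continuous_put_integrand put_integrand_bounds)
    as [l [Hl Hput]].
  rewrite (Egauss_unique _ _ Hput). split; [exact Hl|].
  apply Egauss_unique.
  apply (is_Egauss_ext
           (fun u => exp (- C) * (exp (w / z * u - (w / z) ^ 2 / 2) * put (u - w / z)))).
  - intros u. symmetry. apply psi_K_tilt.
  - apply is_Egauss_scal, is_Egauss_shift, Hput.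
Qed.

Lemma p_put_eq_D_put_add_A_put :
  p_put T r nu mu eta sigma rho s0 lam gam K =
  D_put T r nu mu eta sigma rho s0 lam gam K + A_put T r nu mu eta sigma rho s0 lam gam K.
Proof.
  destruct Egauss_put_integrand_psi_K as [Hpos Hpsi].
  pose proof one_sub_rho_sq_pos.
  unfold p_put, D_put, A_put.
  rewrite Hpsi, ln_mult, ln_exp by (apply exp_pos || exact Hpos).
  field. split; lra.
Qed.

End PutPrice.

Theorem theorem5 (T r nu mu x0 eta sigma rho s0 lam gam K : R)
  (hT : 0 < T) (heta : 0 < eta) (hsigma : 0 < sigma)
  (hrho : -1 < rho < 1) (hs0 : 0 < s0) (hlam : 0 < lam) (hgam : 0 < gam)
  (hK : 0 < K)
  (hKw : let w := wbar T r nu mu eta sigma rho s0 lam gam in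
         / (lam * gam * (1 - rho ^ 2)) *
           (w / (eta ^ 2 * T) + w ^ 2 / (2 * eta ^ 2 * T)) <= K) :
  p_put T r nu mu eta sigma rho s0 lam gam K =
    D_put T r nu mu eta sigma rho s0 lam gam K +
    A_put T r nu mu eta sigma rho s0 lam gam K /\
  V_put T r nu mu eta sigma rho x0 s0 lam gam K =
    V_put_D T r nu mu eta sigma rho x0 s0 lam gam K *
    V_put_A T r nu mu eta sigma rho s0 lam gam K.
Proof.
  assert (Hp := p_put_eq_D_put_add_A_put T r nu mu eta sigma rho s0 lam gam K
                  hT heta hrho hs0 hlam hgam).
  split; [exact Hp|].
  rewrite V_put_D_mul_V_put_A, <- Hp.
  apply V_put_eq_exp_p_put.
  - lra.
  - pose proof (one_sub_rho_sq_pos rho hrho). lra.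
Qed.
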